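(* An $Ł_n$-valued effectivity function $E:\mathcal P N\times Ł_n^S\to Ł_n$ is truly playable if and only if there is a game form $G=(N,\{\Sigma_i\mid i\in N\},S,o)$ such that $E=E_G$.
   Context: For a positive integer $n$ let $Ł_n=\{0,\frac1n,\dots,1\}$ with $\neg x=1-x$, $x\oplus y=\min(x+y,1)$, $x\odot y=\max(x+y-1,0)$, $\wedge=\min$, $\vee=\max$, applied pointwise on $Ł_n^S$; $0,1$ also denote constant functions. Standing assumptions: $N$ finite set of players, $S$ (possibly infinite) set of outcomes, $|N|\ge2$, $|S|\ge2$; coalitions $C\subseteq N$, $\overline C=N\setminus C$. A game form is $G=(N,\{\Sigma_i\mid i\in N\},S,o)$ with nonempty strategy sets $\Sigma_i$ and $o:\prod_{i\in N}\Sigma_i\to S$; $E_G(C,f)=\max_{\sigma_C}\min_{\sigma_{\overline C}} f(o(\sigma_C\sigma_{\overline C}))$, where $\sigma_C$, $\sigma_{\overline C}$ range over joint strategies of $C$ and $\overline C$ and $\sigma_C\sigma_{\overline C}$ is the combined profile. An $Ł_n$-valued effectivity function is any map $E:\mathcal P N\times Ł_n^S\to Ł_n$. It is: outcome monotonic if $f\ge g$ implies $E(C,f)\ge E(C,g)$; $N$-maximal if $\neg E(\varnothing,\neg f)\le E(N,f)$; superadditive if $E(C_1,f)\wedge E(C_2,g)\le E(C_1\cup C_2,f\wedge g)$ whenever $C_1\cap C_2=\varnothing$; homogeneous if $E(C,f\oplus f)=E(C,f)\oplus E(C,f)$ and $E(C,f\odot f)=E(C,f)\odot E(C,f)$; has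 liveness if $E(C,1)=1$ for all $C$; has safety if $E(C,0)=0$ for all $C$; principal if there is $g$ with $\{f\mid E(\varnothing,f)=1\}=\{f\mid f\ge g\odot\cdots\odot g\ (n\text{ factors})\}$. Playable: outcome monotonic, $N$-maximal, superadditive, homogeneous, liveness and safety; truly playable: playable and principal. *)

From mathcomp Require Import all_boot.
Set Implicit Arguments. Unset Strict Implicit. Unset Printing Implicit Defensive.

(* Ł_n = {0, 1/n, ..., 1}, represented by numerators: k : 'I_n.+1 stands for k/n. *)
Definition Ln (n : nat) := 'I_n.+1.

Section Luk.
Variable n : nat.

Definition lzero : Ln n := ord0.
Definition lone : Ln n := ord_max.
Definition lneg (x : Ln n) : Ln n := inord (n - x).
Definition loplus (x y : Ln n) : Ln n := inord (minn (x + y) n).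
Definition lodot (x y : Ln n) : Ln n := inord ((x + y) - n).
Definition lmin (x y : Ln n) : Ln n := inord (minn x y).
Definition lmax (x y : Ln n) : Ln n := inord (maxn x y).
Definition lle (x y : Ln n) : Prop := (x <= y)%N.

End Luk.

Section Eff.
Variables (n : nat) (N : finType) (S : Type).

Definition fneg (f : S -> Ln n) : S -> Ln n := fun s => lneg (f s).
Definition foplus (f g : S -> Ln n) : S -> Ln n := fun s => loplus (f s) (g s).
Definition fodot (f g : S -> Ln n) : S -> Ln n := fun s => lodot (f s) (g s).
Definition fmin (f g : S -> Ln n) : S -> Ln n := fun s => lmin (f s) (g s).
Definition fconst (c : Ln n) : S -> Ln n := fun _ => c.
Definition fle (f g : S -> Ln n) : Prop := forall s, lle (f s) (g s).
Definition fodot_pow (g : S -> Ln n) : S -> Ln n := iter n.-1 (fodot g) g.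

Definition effectivity_function := {set N} -> (S -> Ln n) -> Ln n.

Variable E : effectivity_function.

Definition outcome_monotonic : Prop :=
  forall C f g, fle g f -> lle (E C g) (E C f).
Definition N_maximal : Prop :=
  forall f, lle (lneg (E set0 (fneg f))) (E setT f).
Definition superadditive : Prop :=
  forall (C1 C2 : {set N}) f g, [disjoint C1 & C2] ->
    lle (lmin (E C1 f) (E C2 g)) (E (C1 :|: C2) (fmin f g)).
Definition homogeneous : Prop :=
  forall C f, E C (foplus f f) = loplus (E C f) (E C f) /\
              E C (fodot f f) = lodot (E C f) (E C f).
Definition liveness : Prop := forall C, E C (fconst (lone n)) = lone n.
Definition safety : Prop := forall C, E C (fconst (lzero n)) = lzero n.
Definition principal : Prop :=
  exists g, forall f, E set0 f = lone n <-> fle (fodot_pow g) f.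

Definition playable : Prop :=
  [/\ outcome_monotonic, N_maximal, superadditive, homogeneous & liveness /\ safety].
Definition truly_playable : Prop := playable /\ principal.

End Eff.

Section GameForm.
Variables (n : nat) (N : finType) (S : Type) (Sigma : N -> Type).
Variable o : (forall i, Sigma i) -> S.

(* A joint strategy of a coalition is represented by a full profile whose
   restriction to the coalition is what matters (strategy sets are nonempty). *)
Definition combine (C : {set N}) (p q : forall i, Sigma i) : forall i, Sigma i :=
  fun i => if i \in C then p i else q i.

Definition is_least (P : Ln n -> Prop) (v : Ln n) : Prop :=
  P v /\ forall w, P w -> lle v w.
Definition is_greatest (P : Ln n -> Prop) (v : Ln n) : Prop :=
  P v /\ forall w, P w -> lle w v.

(* v = E_G(C, f) = max_{σ_C} min_{σ_{N\C}} f(o(σ_C σ_{N\C})) *)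
Definition EG_value (C : {set N}) (f : S -> Ln n) (v : Ln n) : Prop :=
  is_greatest
    (fun w => exists p, is_least (fun u => exists q, u = f (o (combine C p q))) w)
    v.

End GameForm.

From mathcomp Require Import all_boot zify boolp.
Set Implicit Arguments. Unset Strict Implicit. Unset Printing Implicit Defensive.

(* v is the max-min value of a game iff, for every k, [k <= v] exactly when C
   has a strategy securing [f >= k] against every reply. Through this threshold
   description each axiom of true playability of E_G becomes a statement about
   strategies; E_G(∅, -) is principal, generated by the indicator of the range
   of the outcome function.

   Conversely, homogeneity makes E commute with [x ⊕ x] and [x ⊙ x], whose
   composites realise every threshold step function of Ł_n; so [k <= E(C, f)]
   iff C is effective (E(C, -) = 1) for the crisp event [f >= k]. In the game,
   every player claims a coalition and an event, suggests an outcome and names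
   a ticket. A player is endorsed when its whole claimed coalition makes the
   same claim and that coalition is effective for the event; by superadditivity
   the endorsed claims and the feasible set {g = 1} are jointly effective, so
   some outcome is acceptable to all of them. The outcome is the suggestion of
   the player picked by the ticket sum modulo |N| if it is acceptable, and some
   acceptable outcome otherwise. An effective coalition forces its event by
   claiming it in unison. If C is not effective for X, neither are its endorsed
   members, so an acceptable outcome lies outside X and a player outside C can
   pick himself and suggest it; for C = N, N-maximality makes ∅ effective for
   the complement of X instead. *)

Section Lukasiewicz.
Variable n : nat.
Implicit Types x y : Ln n.

Lemma val_lone : lone n = n :> nat. Proof. by []. Qed.
Lemma val_lzero : lzero n = 0 :> nat. Proof. by []. Qed.

Lemma val_lneg x : lneg x = n - x :> nat.
Proof. by rewrite inordK // ltnS leq_subr. Qed.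

Lemma val_loplus x y : loplus x y = minn (x + y) n :> nat.
Proof. by rewrite inordK // ltnS geq_minr. Qed.

Lemma val_lodot x y : lodot x y = x + y - n :> nat.
Proof. by rewrite inordK // ltnS leq_subLR leq_add ?leq_ord. Qed.

Lemma val_lmin x y : lmin x y = minn x y :> nat.
Proof. by rewrite inordK // ltnS geq_min leq_ord. Qed.

Lemma ln_anti x y : x <= y -> y <= x -> x = y.
Proof. by move=> xy yx; apply/ord_inj/anti_leq; rewrite xy yx. Qed.

Lemma lone_max x : n <= x -> x = lone n.
Proof. by move=> nx; apply: ln_anti; [exact: leq_ord | exact: nx]. Qed.

Lemma exists_least (P : Ln n -> Prop) : (exists v, P v) -> exists v, is_least P v.
Proof.
case=> v0 /asboolP Pv0.
case: (@arg_minnP _ v0 (fun v => `[< P v >]) (@nat_of_ord _) Pv0) => v /asboolP Pv minv.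
by exists v; split=> // w /asboolP /minv.
Qed.

Lemma iter_lodot_lone k : iter k (lodot (lone n)) (lone n) = lone n.
Proof. by elim: k => //= k ->; apply: ord_inj; rewrite val_lodot addnK. Qed.

Lemma iter_lodot_lt x k : x < n -> iter k (lodot x) x <= x - k.
Proof. by move=> xn; elim: k => [|k IH] /=; [rewrite subn0 | rewrite val_lodot; lia]. Qed.

Lemma lodot_powE x : iter n.-1 (lodot x) x = if x == lone n then lone n else lzero n.
Proof.
case: eqP => [->|xn]; first exact: iter_lodot_lone.
have lt_xn : x < n.
  by rewrite ltn_neqAle leq_ord andbT; apply/eqP => xn'; apply: xn; apply: ord_inj.
by apply: ord_inj; rewrite val_lzero; have := iter_lodot_lt n.-1 lt_xn; lia.
Qed.

Fixpoint bit_ladder (m c : nat) x : Ln n :=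
  if m is m'.+1 then
    let y := bit_ladder m' c./2 x in if odd c then lodot y y else loplus y y
  else x.

Lemma val_bit_ladder m c x : c < 2 ^ m ->
  bit_ladder m c x = minn (2 ^ m * x - c * n) n :> nat.
Proof.
elim: m c => [|m IH] c c_lt /=.
  by move: c_lt; rewrite expn0 ltnS leqn0 => /eqP->; have := leq_ord x; lia.
have c_half : c./2 < 2 ^ m by rewrite expnS in c_lt; lia.
have c_bits : c * n = odd c * n + 2 * (c./2 * n).
  by rewrite -{1}(odd_double_half c) mulnDl -muln2 mulnAC [_ * 2]mulnC.
rewrite expnS -mulnA c_bits.
by case: (odd c) => /=; [rewrite val_lodot | rewrite val_loplus]; rewrite IH //; lia.
Qed.

(* With [c] the ceiling of [2^(n+1) (k-1) / n], [2^(n+1) x - c n] is [<= 0]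
   for [x < k] and [>= n] for [x >= k], because [2^(n+1) >= 2 n]. *)
Lemma threshold_coeff k : 0 < k <= n ->
  exists2 c, c < 2 ^ n.+1 &
    forall x, x <= n -> minn (2 ^ n.+1 * x - c * n) n = (if k <= x then n else 0).
Proof.
case/andP=> k_pos k_le; have n_pos : 0 < n := leq_trans k_pos k_le.
set P := 2 ^ n.+1.
have P_ge : 2 * n < P by rewrite /P expnS; have := ltn_expl n (ltnSn 1); lia.
have c_def := divn_eq (P * (k - 1) + n - 1) n.
set c := _ %/ n in c_def.
have rem_lt := ltn_pmod (P * (k - 1) + n - 1) n_pos.
have Pk : P * k = P * (k - 1) + P by rewrite -mulnSr subn1 prednK.
have Pn : P * n = P * (n - 1) + P by rewrite -mulnSr subn1 prednK.
have Pk_le : P * (k - 1) <= P * (n - 1) by rewrite leq_mul2l; apply/orP; right; lia.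
exists c.
  rewrite ltnNge; apply/negP => c_ge.
  have : P * n <= c * n by rewrite leq_mul2r c_ge orbT.
  lia.
move=> x x_le; case: ifP => kx.
  have : P * k <= P * x by rewrite leq_mul2l kx orbT.
  lia.
have : P * x <= P * (k - 1) by rewrite leq_mul2l; apply/orP; right; lia.
lia.
Qed.

Lemma bit_ladder_threshold k : 0 < k <= n ->
  exists c, forall x, bit_ladder n.+1 c x = if k <= x then lone n else lzero n.
Proof.
move=> k_bnd; have [c c_lt thr] := threshold_coeff k_bnd.
by exists c => x; apply: ord_inj; rewrite val_bit_ladder // thr ?leq_ord //; case: ifP.
Qed.

End Lukasiewicz.

Lemma fodot_powE n S (g : S -> Ln n) s :
  fodot_pow g s = if g s == lone n then lone n else lzero n.
Proof. by rewrite -lodot_powE /fodot_pow; elim: n.-1 => //= k <-. Qed.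

Section GameValue.
Variables (n : nat) (N : finType) (S : Type) (Sigma : N -> Type).
Variable o : (forall i, Sigma i) -> S.
Implicit Types (p q : forall i, Sigma i) (C : {set N}) (f : S -> Ln n).

Lemma combine0 p q : combine set0 p q = q.
Proof. by apply: functional_extensionality_dep => i; rewrite /combine inE. Qed.

Lemma combineT p q : combine setT p q = p.
Proof. by apply: functional_extensionality_dep => i; rewrite /combine inE. Qed.

Lemma EG_valueP C f (v : Ln n) :
  EG_value o C f v <->
  forall k, k <= v <-> exists p, forall q, k <= f (o (combine C p q)).
Proof.
pose outs p u := exists q, u = f (o (combine C p q)).
have least_outs p : exists u, is_least (outs p) u.
  by apply: exists_least; exists (f (o (combine C p p))), p.
split=> [[[p [_ least_p]] greatest_v] k | thr].
  split=> [kv | [p' k_p']].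
    by exists p => q; apply: leq_trans kv (least_p _ _); exists q.
  have [_ [[q ->] least_u]] := least_outs p'.
  by apply: leq_trans (k_p' q) (greatest_v _ _); exists p'; split; first exists q.
have [p v_p] := (thr v).1 (leqnn v).
have [u [[q eq_u] least_u]] := least_outs p.
have u_le : u <= v by apply/(thr u).2; exists p => q'; apply: least_u; exists q'.
have eq_vu : v = u by apply: ln_anti u_le; rewrite eq_u; apply: v_p.
subst v; split=> [|w [p' [[q' ->] least']]]; first by exists p; split; first exists q.
by apply/(thr _).2; exists p' => q''; apply: least'; exists q''.
Qed.

End GameValue.

Section PlayableGame.
Variables (n : nat) (N : finType) (S : Type) (Sigma : N -> Type).
Variables (o : (forall i, Sigma i) -> S) (E : effectivity_function n N S).
Implicit Types (p q : forall i, Sigma i) (C : {set N}) (f : S -> Ln n).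
Hypothesis EGE : forall C f, EG_value o C f (E C f).

Lemma EG_leqP C f k : k <= E C f <-> exists p, forall q, k <= f (o (combine C p q)).
Proof. exact: (EG_valueP o C f (E C f)).1 (EGE C f) k. Qed.

Lemma EG_attained C f : exists p q, E C f = f (o (combine C p q)).
Proof. by have [[p [[q ->] _]] _] := EGE C f; exists p, q. Qed.

Lemma EG_counter C f p : exists q, f (o (combine C p q)) <= E C f.
Proof.
apply: contrapT => /forallNP above.
have [p' hp'] : exists p', forall q, (E C f).+1 <= f (o (combine C p' q)).
  by exists p => q; rewrite ltnNge; apply/negP/above.
by have := (EG_leqP C f _).2 (ex_intro _ p' hp'); rewrite ltnn.
Qed.

Lemma EG_comp_mono (phi : Ln n -> Ln n) C f :
  {homo phi : x y / x <= y} -> E C (fun s => phi (f s)) = phi (E C f).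
Proof.
move=> phi_mono; apply: ln_anti.
  have [p hp] := (EG_leqP C (fun s => phi (f s)) _).1 (leqnn _).
  have [q hq] := EG_counter C f p.
  exact: leq_trans (hp q) (phi_mono _ _ hq).
have [p hp] := (EG_leqP C f _).1 (leqnn _).
by apply/EG_leqP; exists p => q; apply: phi_mono.
Qed.

Lemma EG_outcome_monotonic : outcome_monotonic E.
Proof.
move=> C f g gf; have [p hp] := (EG_leqP C g _).1 (leqnn _).
by apply/EG_leqP; exists p => q; apply: leq_trans (hp q) (gf _).
Qed.

Lemma EG_N_maximal : N_maximal E.
Proof.
move=> f; have [p _] := (EG_leqP set0 (fneg f) 0).1 (leq0n _).
have [q] := EG_counter set0 (fneg f) p; rewrite combine0 /fneg val_lneg => hq.
rewrite /lle val_lneg; apply/EG_leqP; exists q => q'; rewrite combineT.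
by have := leq_ord (f (o q)); lia.
Qed.

Lemma EG_superadditive : superadditive E.
Proof.
move=> C1 C2 f g dis; rewrite /lle val_lmin.
have [p1 h1] := (EG_leqP C1 f _).1 (leqnn _).
have [p2 h2] := (EG_leqP C2 g _).1 (leqnn _).
apply/EG_leqP; exists (combine C1 p1 p2) => q; set r := combine _ _ q.
have r1 : combine C1 p1 r = r.
  by apply: functional_extensionality_dep => i; rewrite /r /combine !inE; case: (i \in C1).
have r2 : combine C2 p2 r = r.
  apply: functional_extensionality_dep => i; rewrite /r /combine !inE.
  by case: (boolP (i \in C2)) => // i2; rewrite (disjointFl dis i2).
by have := h1 r; have := h2 r; rewrite r1 r2 /fmin val_lmin; lia.
Qed.

Lemma EG_homogeneous : homogeneous E.
Proof.
move=> C f; split.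
  by apply: (@EG_comp_mono (fun x => loplus x x) C f) => x y xy; rewrite !val_loplus; lia.
by apply: (@EG_comp_mono (fun x => lodot x x) C f) => x y xy; rewrite !val_lodot; lia.
Qed.

Lemma EG_liveness : liveness E.
Proof.
move=> C; apply: lone_max; have [p _] := (EG_leqP C (fconst (lone n)) 0).1 (leq0n _).
by apply/EG_leqP; exists p.
Qed.

Lemma EG_safety : safety E.
Proof. by move=> C; have [p [q ->]] := EG_attained C (fconst (lzero n)). Qed.

Lemma EG_principal : principal E.
Proof.
pose g s := if `[< exists p, o p = s >] then lone n else lzero n.
exists g => f; split=> [Ef s | fg].
  rewrite /lle fodot_powE; case: eqP => [|_]; last exact: leq0n.
  rewrite /g; case: asboolP => [[p <-] _ | _ /(congr1 val) /= n0]; last lia.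
  have /EG_leqP [p' hp'] : n <= E set0 f by rewrite Ef.
  by have := hp' p; rewrite combine0.
apply: lone_max; have [p _] := (EG_leqP set0 f 0).1 (leq0n _).
apply/EG_leqP; exists p => q; rewrite combine0.
have := fg (o q); rewrite /lle fodot_powE /g.
by case: asboolP => [_ | []]; [rewrite eqxx | exists q].
Qed.

Lemma game_truly_playable : truly_playable E.
Proof.
split; last exact: EG_principal.
split; [exact: EG_outcome_monotonic | exact: EG_N_maximal | exact: EG_superadditive
       | exact: EG_homogeneous | split; [exact: EG_liveness | exact: EG_safety]].
Qed.

End PlayableGame.

Section Construction.
Variables (n : nat) (N : finType) (S : Type) (E : effectivity_function n N S).
Hypothesis n_pos : 0 < n.
Hypotheses (Hmono : outcome_monotonic E) (HNmax : N_maximal E)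
  (Hsup : superadditive E) (Hhom : homogeneous E) (Hlive : liveness E)
  (Hsafe : safety E).
Variable g : S -> Ln n.
Hypothesis Hg : forall f, E set0 f = lone n <-> fle (fodot_pow g) f.
Implicit Types (B C D : {set N}) (f : S -> Ln n) (X Y : S -> bool).

Definition indicator X : S -> Ln n := fun s => if X s then lone n else lzero n.
Definition effective C X := E C (indicator X) = lone n.

Lemma E_bit_ladder m c C f :
  E C (fun s => bit_ladder m c (f s)) = bit_ladder m c (E C f).
Proof.
elim: m c => [|m IH] c //=.
have [E_oplus E_odot] := Hhom C (fun s => bit_ladder m c./2 (f s)).
by case: (odd c); rewrite -IH ?E_odot ?E_oplus.
Qed.

Lemma leq_E_effective C f k : 0 < k <= n ->
  k <= E C f <-> effective C (fun s => k <= f s).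
Proof.
move=> k_bnd; have [c thr] := bit_ladder_threshold k_bnd; rewrite /effective.
have -> : indicator (fun s => k <= f s) = fun s => bit_ladder n.+1 c (f s).
  by apply: funext => s; rewrite thr.
rewrite E_bit_ladder thr; case: ifP => // _; split=> // /(congr1 val) /=.
by case/andP: k_bnd; lia.
Qed.

Lemma not_effective_E0 C X : ~ effective C X -> E C (indicator X) = lzero n.
Proof.
move=> notEX; have idem : foplus (indicator X) (indicator X) = indicator X.
  apply: funext => s; apply: ord_inj; rewrite val_loplus /indicator.
  by case: (X s); rewrite ?val_lone ?val_lzero; lia.
have [+ _] := Hhom C (indicator X); rewrite idem => /(congr1 (@nat_of_ord _)).
rewrite val_loplus => dbl; case: (posnP (E C (indicator X))) => [E0 | E_pos].
  by apply: ord_inj; rewrite E0.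
by case: notEX; apply: lone_max; lia.
Qed.

Lemma effective_nonempty C X : effective C X -> exists s, X s.
Proof.
move=> EX; apply: contrapT => /forallNP noX.
have X0 : indicator X = fconst (lzero n).
  by apply: funext => s; rewrite /indicator; case: ifP => // /noX.
by move: EX; rewrite /effective X0 Hsafe => /(congr1 (@nat_of_ord _)) /=; lia.
Qed.

Lemma effective_mono C X Y : (forall s, X s -> Y s) -> effective C X -> effective C Y.
Proof.
move=> XY EX; apply: lone_max.
have := Hmono C (f := indicator Y) (g := indicator X); rewrite EX; apply=> s.
by rewrite /lle /indicator; case: (boolP (X s)) => [/XY ->|].
Qed.

Lemma effective_union D C X Y : D \subset C ->
  effective D X -> effective (C :\: D) Y -> effective C (fun s => X s && Y s).
Proof.
move=> DC EX EY.
have dis : [disjoint D & C :\: D] by rewrite disjoint_sym disjoints_subset subsetDr.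
have DUC : D :|: C :\: D = C.
  by apply/setP => x; rewrite !inE; case: (boolP (x \in D)) => // /(subsetP DC).
have := Hsup (indicator X) (indicator Y) dis; rewrite DUC EX EY.
have -> : fmin (indicator X) (indicator Y) = indicator (fun s => X s && Y s).
  apply: funext => s; apply: ord_inj; rewrite /fmin val_lmin /indicator.
  by case: (X s); case: (Y s); rewrite ?val_lone ?val_lzero ?minnn ?minn0 ?min0n.
by rewrite /lle val_lmin minnn; apply: lone_max.
Qed.

Lemma effective_subset D C X : D \subset C -> effective D X -> effective C X.
Proof.
move=> DC EX; have ET : effective (C :\: D) xpredT := Hlive _.
apply: effective_mono (effective_union DC EX ET).
by move=> s /andP [].
Qed.

Lemma effective_setT_compl X : ~ effective setT X -> effective set0 (fun s => ~~ X s).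
Proof.
move/not_effective_E0 => E0; have := HNmax (indicator X); rewrite E0 /lle val_lneg.
have -> : fneg (indicator X) = indicator (fun s => ~~ X s).
  apply: funext => s; apply: ord_inj; rewrite /fneg val_lneg /indicator.
  by case: (X s); rewrite /= ?val_lone ?val_lzero ?subnn ?subn0.
by rewrite val_lzero => h; apply: lone_max; lia.
Qed.

Definition feasible s := g s == lone n.

Lemma effective0P X : effective set0 X <-> forall s, feasible s -> X s.
Proof.
split=> [E0 s gs | feasX].
  have := (Hg (indicator X)).1 E0 s; rewrite /lle fodot_powE (eqP gs) eqxx /indicator.
  by case: (X s) => //; rewrite val_lone val_lzero; lia.
apply/Hg => s; rewrite /lle fodot_powE; case: ifP => [/feasX Xs | _]; last exact: leq0n.
by rewrite /indicator Xs.
Qed.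

Definition claim := ({set N} * (S -> bool))%type.

Record strategy := Strategy { claim_of : claim; suggestion : S; ticket : nat }.

Implicit Types (c : N -> claim) (r : N -> strategy).

Definition endorsed c i : Prop :=
  [/\ i \in (c i).1, {in (c i).1, forall j, c j = c i} & effective (c i).1 (c i).2].

Definition endorsed_set c : {set N} := [set i | `[< endorsed c i >]].

Definition acceptable c s := feasible s && [forall i in endorsed_set c, (c i).2 s].

Lemma endorsed_closed c i j : endorsed c i -> j \in (c i).1 -> endorsed c j.
Proof. by case=> iD eqD effD jD; rewrite /endorsed (eqD j jD). Qed.

Lemma effective_block c B :
  {in B, forall i, endorsed c i /\ (c i).1 \subset B} ->
  effective B (fun s => feasible s && [forall i in B, (c i).2 s]).
Proof.
have [m] := ubnP #|B|; elim: m => // m IH in B *; rewrite ltnS => leBm closedB.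
have [-> | [i iB]] := set_0Vmem B.
  by apply/effective0P => s ->; apply/forallP => i; rewrite inE.
have [[iD eqD effD] DB] := closedB i iB; set D := (c i).1 in iD eqD effD DB.
have closedB' : {in B :\: D, forall j, endorsed c j /\ (c j).1 \subset B :\: D}.
  move=> j /setDP [jB jND]; have [endj DjB] := closedB j jB; split=> //.
  apply/subsetP => k kDj; rewrite inE (subsetP DjB) // andbT.
  (* the claims of two endorsed players are equal or disjoint *)
  apply: contra jND => kD; have [jDj eqDj _] := endj.
  by rewrite /D -(eqD k kD) (eqDj k kDj).
have ltB' : #|B :\: D| < m.
  have : 0 < #|B :&: D| by apply/card_gt0P; exists i; rewrite inE iB.
  by have := subset_leq_card (subsetIl B D); rewrite cardsD; lia.
apply: effective_mono (effective_union DB effD (IH _ ltB' closedB')).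
move=> s /andP [Xi /andP [fs allB']]; rewrite fs; apply/forallP => j; apply/implyP => jB.
have [jD | jND] := boolP (j \in D); first by rewrite (eqD j jD).
by have /implyP := forallP allB' j; apply; rewrite inE jND.
Qed.

Lemma effective_acceptable c : effective (endorsed_set c) (acceptable c).
Proof.
apply: effective_block => i; rewrite inE => /asboolP endi; split=> //.
by apply/subsetP => j jD; rewrite inE; apply/asboolP; apply: endorsed_closed endi jD.
Qed.

Lemma exists_acceptable c : exists s, acceptable c s.
Proof. exact: effective_nonempty (effective_acceptable c). Qed.

Variables (s0 : S) (x0 : N).

Definition abstention s t := Strategy (set0, xpredT) s t.

Definition claims r i := claim_of (r i).

Definition chosen (tk : N -> nat) : N := nth x0 (enum N) ((\sum_i tk i) %% #|N|).

Definition suggested r := suggestion (r (chosen (fun i => ticket (r i)))).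

Definition outcome r : S :=
  if acceptable (claims r) (suggested r) then suggested r
  else sval (cid (exists_acceptable (claims r))).

Lemma outcome_acceptable r : acceptable (claims r) (outcome r).
Proof. by rewrite /outcome; case: ifP => // _; case: cid. Qed.

Lemma outcome_suggested r : acceptable (claims r) (suggested r) -> outcome r = suggested r.
Proof. by rewrite /outcome => ->. Qed.

Lemma exists_addn_modn m k R : k < m -> exists t, (t + R) %% m = k.
Proof.
move=> km; have m_pos : 0 < m := leq_ltn_trans (leq0n k) km.
exists (k + R * m - R); rewrite subnK; last exact: leq_trans (leq_pmulr R m_pos) (leq_addl _ _).
by rewrite addnC modnMDl modn_small.
Qed.

Lemma chosen_override tk j : exists t, chosen (fun i => if i == j then t else tk i) = j.
Proof.
have j_idx : index j (enum N) < #|N| by rewrite cardE index_mem mem_enum.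
have [t tR] := exists_addn_modn (\sum_(i | i != j) tk i) j_idx.
exists t; rewrite /chosen (bigD1 j) //= eqxx.
rewrite (eq_bigr tk) => [|i /negbTE -> //].
by rewrite tR nth_index ?mem_enum.
Qed.

Lemma effective_forces C X : effective C X -> exists p, forall q, X (outcome (combine C p q)).
Proof.
case: (set_0Vmem C) => [-> | [i iC]] EX.
  exists (fun=> abstention s0 0) => q; set r := combine _ _ q.
  by have /andP [feas _] := outcome_acceptable r; apply: (effective0P X).1.
exists (fun=> Strategy (C, X) s0 0) => q; set r := combine C _ q.
have claimsC : {in C, forall j, claims r j = (C, X)}.
  by move=> j jC; rewrite /claims /r /combine jC.
have endi : i \in endorsed_set (claims r).
  by rewrite inE; apply/asboolP; rewrite /endorsed claimsC.
by have /andP [_ /forallP /(_ i)] := outcome_acceptable r; rewrite endi claimsC.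
Qed.

Lemma forces_effective C X p : (forall q, X (outcome (combine C p q))) -> effective C X.
Proof.
move=> forceX; apply: contrapT => notEX.
case: (pselect (exists j0, j0 \notin C)) => [[j0 j0C] | allC]; last first.
  have CT : C = setT.
    by apply/setP => j; rewrite inE; apply: contrapT => jC; apply: allC; exists j; apply/negP.
  rewrite CT in notEX forceX; have /effective0P notX := effective_setT_compl notEX.
  have /andP [fs _] := outcome_acceptable (combine setT p p).
  by have := notX _ fs; rewrite forceX.
pose q s t j := abstention s (if j == j0 then t else 0).
have claimsE s t : claims (combine C p (q s t)) = claims (combine C p (q s0 0)).
  by apply: funext => j; rewrite /claims /combine; case: (j \in C).
set c := claims (combine C p (q s0 0)).
have endC : endorsed_set c \subset C.
  apply/subsetP => j; rewrite inE => /asboolP [jD _ _]; apply: contraTT jD => jC.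
  by rewrite /c /claims /combine (negbTE jC) inE.
have [s /andP [acc_s notXs]] : exists s, acceptable c s && ~~ X s.
  apply: contrapT => /forallNP noCounter; apply: notEX.
  apply: effective_subset endC (effective_mono _ (effective_acceptable c)) => s acc.
  by apply: contrapT => /negP nX; apply: (noCounter s); rewrite acc nX.
have [t chosen_j0] := chosen_override (fun i => ticket (combine C p (q s0 0) i)) j0.
have tickets : (fun i => ticket (combine C p (q s t) i))
    = fun i => if i == j0 then t else ticket (combine C p (q s0 0) i).
  apply: funext => i; rewrite /combine /q; case: eqP => [-> | _].
    by rewrite (negbTE j0C).
  by case: (i \in C).
have sugg : suggested (combine C p (q s t)) = s.
  by rewrite /suggested tickets chosen_j0 /combine (negbTE j0C).
have acc : acceptable (claims (combine C p (q s t))) (suggested (combine C p (q s t))).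
  by rewrite sugg claimsE.
by have := forceX (q s t); rewrite outcome_suggested // sugg (negbTE notXs).
Qed.

Lemma EG_outcome C f : EG_value outcome C f (E C f).
Proof.
apply/EG_valueP => k; case: (posnP k) => [-> | k_pos].
  by split=> // _; exists (fun=> abstention s0 0).
case: (leqP k n) => [k_le | n_lt].
  apply: iff_trans (leq_E_effective _ _ _) _; first by rewrite k_pos.
  by split=> [|[p]]; [exact: effective_forces | exact: forces_effective].
split=> [kE | [p kp]]; first by have := leq_ord (E C f); lia.
by have := kp p; have := leq_ord (f (outcome (combine C p p))); lia.
Qed.

End Construction.

Theorem mainTheorem5 (n : nat) (N : finType) (S : Type)
    (hn : (0 < n)%N) (hN : (2 <= #|N|)%N) (hS : exists s t : S, s <> t)
    (E : effectivity_function n N S) :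
  truly_playable E <->
  exists (Sigma : N -> Type) (_ : forall i, inhabited (Sigma i))
         (o : (forall i, Sigma i) -> S),
    forall (C : {set N}) (f : S -> Ln n), EG_value o C f (E C f).
Proof.
split=> [[[Hmono HNmax Hsup Hhom [Hlive Hsafe]] [g Hg]] | [Sigma [_ [o EGE]]]].
  have [s0 _] := hS; have /card_gt0P [x0 _] : 0 < #|N| by lia.
  exists (fun=> strategy N S), (fun=> inhabits (abstention N s0 0)).
  by eexists; apply: EG_outcome.
exact: game_truly_playable EGE.
Qed.
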